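(* Let $W$ and $A$ be finite sets and $\alpha\colon W\times A\to\Delta_W$ a Markov kernel. Let $f_\alpha\colon\Delta_{W\times A}\to\Delta_{W\times W}$ be the linear map $p(w,a)\mapsto\sum_a p(w,a)\alpha(w'|w,a)$, let $\Xi=\{q\in\Delta_{W\times W}\colon \sum_{w'}q(\cdot,w')=\sum_{w}q(w,\cdot)\}$ be the polytope of joint distributions with equal first and second marginals, and let $J=f_\alpha^{-1}(\Xi)\subseteq\Delta_{W\times A}$. Then each extreme point of $J$ can be written as $p(w,a)=p(w)p(a|w)$, where $p(w)\in\Delta_W$ and $p(a|w)$ is an extreme point of $\Delta_{W,A}$.
   Context: $\Delta_X$ denotes the probability simplex of distributions on a finite set $X$. $\Delta_{W,A}=\prod_{w\in W}\Delta_A$ denotes the polytope of Markov kernels (conditional distributions) $p(a|w)$ from $W$ to $A$; its extreme points are the deterministic kernels $p(a|w)=\delta_{f(w)}(a)$ for functions $f\colon W\to A$. *)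

From mathcomp Require Import all_boot all_order all_algebra.
From mathcomp Require Import reals.
Set Implicit Arguments. Unset Strict Implicit. Unset Printing Implicit Defensive.
Import Order.TTheory GRing.Theory Num.Theory.
Local Open Scope ring_scope.

Definition simplex (R : realType) (X : finType) (p : X -> R) : Prop :=
  (forall x, 0 <= p x) /\ \sum_(x : X) p x = 1.

(* Polytope Delta_{W,A} of Markov kernels p(a|w), encoded as k (w, a). *)
Definition kernel_polytope (R : realType) (W A : finType) (k : W * A -> R) : Prop :=
  forall w : W, simplex (fun a : A => k (w, a)).

Definition extreme_point (R : realType) (X : Type) (S : (X -> R) -> Prop)
  (p : X -> R) : Prop :=
  S p /\
  forall (q r : X -> R) (t : R), S q -> S r -> 0 < t < 1 ->
    p = (fun x => t * q x + (1 - t) * r x) -> q = p /\ r = p.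

(* The linear map f_alpha : p(w,a) |-> sum_a p(w,a) alpha(w'|w,a), alpha w a w' = alpha(w'|w,a). *)
Definition f_alpha (R : realType) (W A : finType) (alpha : W -> A -> W -> R)
  (p : W * A -> R) : W * W -> R :=
  fun ww => \sum_(a : A) p (ww.1, a) * alpha ww.1 a ww.2.

Definition Xi (R : realType) (W : finType) (q : W * W -> R) : Prop :=
  simplex q /\
  forall w : W, \sum_(w' : W) q (w, w') = \sum_(w0 : W) q (w0, w).

Definition J (R : realType) (W A : finType) (alpha : W -> A -> W -> R)
  (p : W * A -> R) : Prop :=
  simplex p /\ Xi (f_alpha alpha p).

(* An extreme point p of J admits no nonzero perturbation d supported on the
   support of p that preserves total mass and the stationarity ("flow")
   equations.  These are one equation per visited state, one of them
   redundant, plus the mass equation; so when some state carries two actions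
   the support has more points than there are equations, and a nonzero
   perturbation exists.  Hence each visited state carries a single action,
   and p is its state marginal times a deterministic kernel. *)

From mathcomp Require Import all_boot all_order all_algebra.
From mathcomp Require Import reals.
From mathcomp Require Import zify ring lra.
From Stdlib Require Import FunctionalExtensionality.
Set Implicit Arguments. Unset Strict Implicit. Unset Printing Implicit Defensive.
Import Order.TTheory GRing.Theory Num.Theory.
Local Open Scope ring_scope.

Lemma underdetermined_solution (F : fieldType) (X C : finType)
    (P : {set X}) (Q : {set C}) (c : X -> C -> F) :
  (#|Q| < #|P|)%N ->
  exists d : X -> F, [/\ forall x, x \notin P -> d x = 0, exists x, d x != 0
    & forall j, j \in Q -> \sum_x d x * c x j = 0].
Proof.
move=> ltQP.
pose M : 'M[F]_(#|P|, #|Q|) := \matrix_(i, j) c (enum_val i) (enum_val j).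
pose v := nz_row (kermx M).
have vM : v *m M = 0 by apply/eqP; rewrite -sub_kermx nz_row_sub.
have v_neq0 : v != 0.
  rewrite nz_row_eq0 -mxrank_eq0 mxrank_ker; apply/eqP => h.
  have := rank_leq_col M; move: h ltQP; lia.
pose d x := \sum_(i | enum_val i == x) v 0 i.
exists d; split.
- move=> x xNP; apply: big_pred0 => i; apply/eqP => e.
  by move: xNP; rewrite -e enum_valP.
- have [i vi] : exists i, v 0 i != 0.
    apply/existsP; apply: contraR v_neq0; rewrite negb_exists => /forallP h.
    by apply/eqP/rowP => i; rewrite mxE; apply/eqP/negbNE/h.
  exists (enum_val i); rewrite /d (eq_bigl (pred1 i)) ?big_pred1_eq //.
  by move=> i' /=; rewrite (inj_eq enum_val_inj).
- move=> j jQ.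
  have := congr1 (fun m : 'M[F]_(1, #|Q|) => m 0 (enum_rank_in jQ j)) vM.
  rewrite !mxE => h; rewrite -[RHS]h (partition_big enum_val xpredT) //=.
  apply: eq_bigr => x _; rewrite /d mulr_suml; apply: eq_bigr => i /eqP ei.
  by rewrite mxE ei enum_rankK_in.
Qed.

Section Perturbation.
Variables (R : realType) (X : finType).

Lemma extreme_point_perturbation (S : (X -> R) -> Prop) (p d : X -> R) (e : R) :
  extreme_point S p -> 0 < e ->
  S (fun x => p x + e * d x) -> S (fun x => p x + - e * d x) ->
  forall x, d x = 0.
Proof.
move=> [_ ext] e_gt0 Splus Sminus x.
have half : (0 < 1 / 2 :> R) && (1 / 2 < 1 :> R) by apply/andP; split; lra.
have p_mid : p = (fun x => 1 / 2 * (p x + e * d x) + (1 - 1 / 2) * (p x + - e * d x)).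
  by apply: functional_extensionality => y; field.
have [/(congr1 (fun f => f x)) /= plus_eq _] := ext _ _ _ Splus Sminus half p_mid.
have /eqP : e * d x = 0 by lra.
by rewrite mulf_eq0 gt_eqF //= => /eqP.
Qed.

Lemma nonneg_perturbation (p d : X -> R) :
  (forall x, 0 <= p x) -> (forall x, p x = 0 -> d x = 0) ->
  exists2 e, 0 < e & forall lam x, `|lam| <= e -> 0 <= p x + lam * d x.
Proof.
move=> p_ge0 d_supp.
pose e := \big[Order.min/1]_(x | p x != 0) (p x / (1 + `|d x|)).
have denom_gt0 x : 0 < 1 + `|d x| by apply: ltr_wpDr.
exists e => [|lam x le_lam_e].
  apply: lt_bigmin => // x px; apply: divr_gt0 => //.
  by rewrite lt_def px p_ge0.
have [px | px] := eqVneq (p x) 0; first by rewrite (d_supp _ px) px mulr0 addr0.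
have : e * (1 + `|d x|) <= p x.
  by rewrite -ler_pdivlMr //; apply: (bigmin_le_cond _ (fun y => p y / _) px).
have : `|lam * d x| <= e * (1 + `|d x|).
  rewrite normrM; apply: le_trans (ler_wpM2r (normr_ge0 _) le_lam_e) _.
  by rewrite ler_wpM2l ?lerDr // (le_trans _ le_lam_e).
by rewrite ler_norml => /andP [? ?] ?; lra.
Qed.

End Perturbation.

Section Stationarity.
Variables (R : realType) (W A : finType) (alpha : W -> A -> W -> R).
Hypothesis halpha : forall (w : W) (a : A), simplex (alpha w a).

Definition flow (q : W * A -> R) :=
  forall w, \sum_a q (w, a) = \sum_x q x * alpha x.1 x.2 w.

Lemma sum_pair (I K : finType) (G : I * K -> R) :
  \sum_x G x = \sum_i \sum_k G (i, k).
Proof. by rewrite pair_bigA; apply: eq_bigr => -[]. Qed.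

Lemma sum_at_state (q : W * A -> R) w :
  \sum_x q x * (x.1 == w)%:R = \sum_a q (w, a).
Proof.
have others : \sum_(v | v != w) \sum_a q (v, a) * (v == w)%:R = 0.
  by apply: big1 => v /negbTE vw; apply: big1 => a _; rewrite vw mulr0.
rewrite sum_pair (bigD1 w) //= others addr0.
by apply: eq_bigr => a _; rewrite eqxx mulr1.
Qed.

Lemma f_alpha_rowsum (q : W * A -> R) w :
  \sum_w' f_alpha alpha q (w, w') = \sum_a q (w, a).
Proof.
rewrite /f_alpha /= exchange_big; apply: eq_bigr => a _.
by rewrite -mulr_sumr (halpha w a).2 mulr1.
Qed.

Lemma f_alpha_colsum (q : W * A -> R) w :
  \sum_w0 f_alpha alpha q (w0, w) = \sum_x q x * alpha x.1 x.2 w.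
Proof. by rewrite sum_pair. Qed.

Lemma JP (q : W * A -> R) :
  J alpha q <-> [/\ forall x, 0 <= q x, \sum_x q x = 1 & flow q].
Proof.
split=> [[[q_ge0 q_sum1] [_ fq]] | [q_ge0 q_sum1 fq]].
  by split=> // w; rewrite -f_alpha_rowsum fq f_alpha_colsum.
split=> //; split; last by move=> w; rewrite f_alpha_rowsum f_alpha_colsum fq.
split.
  move=> [w w']; apply: sumr_ge0 => a _.
  by apply: mulr_ge0 => //; apply: (halpha _ _).1.
by rewrite sum_pair -q_sum1 sum_pair; apply: eq_bigr => w _; rewrite f_alpha_rowsum.
Qed.

Lemma flowD (q d : W * A -> R) lam :
  flow q -> flow d -> flow (fun x => q x + lam * d x).
Proof.
move=> fq fd w; rewrite big_split /= -mulr_sumr fq fd mulr_sumr -big_split /=.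
by apply: eq_bigr => x _; rewrite mulrDl mulrA.
Qed.

(* The flow equations are dependent: their sum over all states is 0 = 0. *)
Lemma flow_from_all_but_one (q : W * A -> R) w :
  (forall j, j != w -> \sum_a q (j, a) = \sum_x q x * alpha x.1 x.2 j) ->
  flow q.
Proof.
move=> fq i; have [-> | ] := eqVneq i w; last exact: fq.
pose defect j := \sum_a q (j, a) - \sum_x q x * alpha x.1 x.2 j.
have total : \sum_j defect j = 0.
  rewrite sumrB -sum_pair exchange_big /=.
  rewrite [X in _ - X](eq_bigr q) ?subrr // => x _.
  by rewrite -mulr_sumr (halpha _ _).2 mulr1.
have others : \sum_(j | j != w) defect j = 0.
  by apply: big1 => j jw; rewrite /defect fq ?subrr.
by move/eqP: total; rewrite (bigD1 w) //= others addr0 subr_eq0 => /eqP.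
Qed.

Lemma inflow_on_support (q d : W * A -> R) j :
  (forall x, 0 <= q x) -> (forall x, q x = 0 -> d x = 0) ->
  \sum_x q x * alpha x.1 x.2 j = 0 -> \sum_x d x * alpha x.1 x.2 j = 0.
Proof.
move=> q_ge0 d_supp q_in0; apply: big1 => x _.
have [/d_supp -> | qx] := eqVneq (q x) 0; first by rewrite mul0r.
have /eqP : q x * alpha x.1 x.2 j = 0.
  apply: (psumr_eq0P _ q_in0) => // y _.
  by apply: mulr_ge0 => //; apply: (halpha _ _).1.
by rewrite mulf_eq0 (negbTE qx) => /eqP ->; rewrite mulr0.
Qed.

Lemma extreme_J_rigid (p d : W * A -> R) :
  extreme_point (J alpha) p -> (forall x, p x = 0 -> d x = 0) ->
  \sum_x d x = 0 -> flow d -> forall x, d x = 0.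
Proof.
move=> hp d_supp d_sum0 fd.
have [p_ge0 p_sum1 fp] := (JP p).1 hp.1.
have [e e_gt0 small] := nonneg_perturbation p_ge0 d_supp.
have inJ lam : `|lam| <= e -> J alpha (fun x => p x + lam * d x).
  move=> le_lam_e; apply/JP; split; first by move=> x; apply: small.
    by rewrite big_split /= p_sum1 -mulr_sumr d_sum0 mulr0 addr0.
  exact: flowD.
apply: (extreme_point_perturbation hp e_gt0); apply: inJ.
  by rewrite gtr0_norm.
by rewrite normrN gtr0_norm.
Qed.

Lemma extreme_J_single_action (p : W * A -> R) :
  extreme_point (J alpha) p ->
  forall w a1 a2, p (w, a1) != 0 -> p (w, a2) != 0 -> a1 = a2.
Proof.
move=> hp w a1 a2 p1 p2; apply/eqP/negPn/negP => a12.
have [p_ge0 _ fp] := (JP p).1 hp.1.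
pose S := [set v | [exists a, p (v, a) != 0]].
pose P := [set x | p x != 0].
(* Equation [w] is replaced by conservation of mass, the others are the flow
   equations at the visited states. *)
pose c (x : W * A) (j : W) : R :=
  if j == w then 1 else (x.1 == j)%:R - alpha x.1 x.2 j.
have ltSP : (#|S| < #|P|)%N.
  pose g v := (v, if v == w then a1 else odflt a1 [pick a | p (v, a) != 0]).
  have g_inj : injective g by move=> u v [].
  rewrite -(card_imset _ g_inj); apply: proper_card; apply/properP; split.
    apply/subsetP => x /imsetP [v vS ->]; rewrite inE /g.
    case: ifP => [/eqP -> | _] //; move: vS; rewrite inE => /existsP [a pa].
    by case: pickP => [b pb | /(_ a)] //=; rewrite pa.
  exists (w, a2); first by rewrite inE.
  by apply/imsetP => -[v _ [<- a2E]]; rewrite eqxx in a2E; rewrite a2E eqxx in a12.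
have [d [d_supp [x0 dx0] d_eqs]] := underdetermined_solution c ltSP.
have d_supp' x : p x = 0 -> d x = 0 by move=> px; apply: d_supp; rewrite inE px eqxx.
have wS : w \in S by rewrite inE; apply/existsP; exists a1.
have d_sum0 : \sum_x d x = 0.
  by rewrite -[RHS](d_eqs w wS); apply: eq_bigr => x _; rewrite /c eqxx mulr1.
have fd : flow d.
  apply: (flow_from_all_but_one (w := w)) => j jw.
  have [jS | jNS] := boolP (j \in S).
    have /eqP := d_eqs j jS; rewrite /c (negbTE jw).
    under eq_bigr do rewrite mulrBr.
    rewrite sumrB subr_eq0 => /eqP <-.
    by rewrite sum_at_state.
  have pj a : p (j, a) = 0.
    by apply/eqP; move: jNS; rewrite inE negb_exists => /forallP /(_ a)/negPn.
  rewrite (inflow_on_support p_ge0 d_supp') -?fp; last by apply: big1.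
  by apply: big1 => a _; apply/d_supp'/pj.
by move: dx0; rewrite (extreme_J_rigid hp d_supp' d_sum0 fd) eqxx.
Qed.

End Stationarity.

Section DeterministicKernels.
Variables (R : realType) (W A : finType) (f : W -> A).

Definition deterministic_kernel (x : W * A) : R := (x.2 == f x.1)%:R.

Lemma deterministic_kernel_face (q r : W * A -> R) t :
  kernel_polytope q -> kernel_polytope r -> 0 < t < 1 ->
  (forall x, deterministic_kernel x = t * q x + (1 - t) * r x) ->
  q = deterministic_kernel.
Proof.
move=> hq hr /andP [t_gt0 t_lt1] comb.
have q0 w a : a != f w -> q (w, a) = 0.
  move=> ne; have := comb (w, a); rewrite /deterministic_kernel /= (negbTE ne) mulr0n.
  have tq_ge0 : 0 <= t * q (w, a) by apply: mulr_ge0; [exact: ltW | exact: (hq w).1].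
  have tr_ge0 : 0 <= (1 - t) * r (w, a) by apply: mulr_ge0; [lra | exact: (hr w).1].
  move=> h; have /eqP : t * q (w, a) = 0 by lra.
  by rewrite mulf_eq0 gt_eqF //= => /eqP.
apply: functional_extensionality => -[w a]; rewrite /deterministic_kernel /=.
have [-> | ne] := eqVneq a (f w); last by rewrite q0.
have := (hq w).2; rewrite (bigD1 (f w)) //= big1 ?addr0 // => b.
exact: q0.
Qed.

Lemma deterministic_kernel_extreme :
  extreme_point (@kernel_polytope R W A) deterministic_kernel.
Proof.
split=> [w | q r t hq hr ht comb].
  rewrite /deterministic_kernel; split=> [a | ]; first by rewrite ler0n.
  by rewrite (bigD1 (f w)) //= eqxx big1 ?addr0 // => b /negbTE /= ->.
have comb' x := congr1 (fun g => g x) comb.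
split; first by apply: (deterministic_kernel_face hq hr ht).
apply: (deterministic_kernel_face (t := 1 - t) hr hq).
  by move: ht => /andP [? ?]; apply/andP; split; lra.
by move=> x; rewrite comb' /=; ring.
Qed.

End DeterministicKernels.

Arguments deterministic_kernel {R W A} f x.

Theorem lemma2 (R : realType) (W A : finType) (alpha : W -> A -> W -> R)
  (halpha : forall (w : W) (a : A), simplex (alpha w a))
  (p : W * A -> R) (hp : extreme_point (J alpha) p) :
  exists (pw : W -> R) (k : W * A -> R),
    simplex pw /\ extreme_point (@kernel_polytope R W A) k /\
    forall (w : W) (a : A), p (w, a) = pw w * k (w, a).
Proof.
have single := extreme_J_single_action halpha hp.
have [p_ge0 p_sum1 _] := (JP halpha p).1 hp.1.
have [[_ a0] _] : exists x, p x != 0.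
  apply/existsP; apply: contraT; rewrite negb_exists => /forallP p0.
  by move: p_sum1; rewrite big1 => [/eqP | x _]; [rewrite eq_sym oner_eq0 | apply/eqP/negPn].
pose f w := odflt a0 [pick a | p (w, a) != 0].
have p0 w a : a != f w -> p (w, a) = 0.
  move=> ne; apply/eqP/negPn/negP => pa; move: ne.
  rewrite /f; case: pickP => [b pb | /(_ a)] /=; last by rewrite pa.
  by rewrite (single w a b pa pb) eqxx.
exists (fun w => \sum_a p (w, a)), (deterministic_kernel f); split; [split | split].
- by move=> w; apply: sumr_ge0.
- by rewrite -p_sum1 [RHS]sum_pair.
- exact: deterministic_kernel_extreme.
- move=> w a; rewrite /deterministic_kernel /=.
  have [-> | ne] := eqVneq a (f w); last by rewrite p0 // mulr0.
  by rewrite mulr1 (bigD1 (f w)) //= big1 ?addr0 // => b; apply: p0.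
Qed.
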